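(* For a tuple $\vec a=(a_1,\dots,a_{2i})$ of odd integers and a virtual character $\chi$ of $C_8$, set $$F_{4i+1}(\vec a)(\chi)=\frac18\sum_{1\ne\lambda\in C_8}\frac{\lambda^{(a_1+\cdots+a_{2i})/2}(1+\lambda^{a_1})}{(1-\lambda^{a_1})^2(1-\lambda^{a_2})\cdots(1-\lambda^{a_{2i}})}\,\chi(\lambda).$$ Then $F_5((1,1))(2\rho_0-\rho_1-\rho_3)$ has order $2$ in $\mathbb{R}/\mathbb{Z}$ and $F_{13}((1,1,1,1,1,1))(2\rho_0-\rho_1-\rho_3)$ has order $4$ in $\mathbb{R}/\mathbb{Z}$.
   Context: $C_8=\{\lambda\in S^1:\lambda^8=1\}$, $\rho_a(\lambda)=\lambda^a$, $\rho_0$ trivial. $F_{4i+1}(\vec a)(\rho)$ equals the eta invariant of $X^{4i+1}(8,\vec a)-X^{4i+1}_0(8,\vec a)$ twisted by $\rho$, where $X^{4i+1}(8,\vec a)=S(H\otimes H\oplus(2i-1)\mathbb{C}\to S^2)/C_8$ with $H$ the Hopf line bundle over $S^2$ and $C_8$ acting fibrewise via $\rho_{a_1}\oplus\cdots\oplus\rho_{a_{2i}}$. The virtual representation $2\rho_0-\rho_1-\rho_3$ is the restriction to $\langle s\rangle\cong C_8$ of $2-\chi_\rho$ for the 2-dimensional representation $\chi_\rho$ of $SD_{16}$. *)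

From HB Require Import structures.
From mathcomp Require Import all_boot all_order all_algebra all_field.
Set Implicit Arguments. Unset Strict Implicit. Unset Printing Implicit Defensive.
Import Order.TTheory GRing.Theory Num.Theory.
Local Open Scope ring_scope.

(* C_8 = { z ^+ k | k < 8 } for z a primitive 8th root of unity in algC.
   A virtual character of C_8 is represented as a function algC -> algC
   (only its values on C_8 matter). *)

Definition rho (a : int) (l : algC) : algC := l ^ a.

Definition chi_SD (l : algC) : algC := 2 * rho 0 l - rho 1 l - rho 3 l.

Definition F (z : algC) (a : seq int) (chi : algC -> algC) : algC :=
  8^-1 * \sum_(k < 8 | k != ord0)
    (let l := z ^+ k in
     l ^ ((\sum_(x <- a) x) %/ 2)%Z * (1 + l ^ (nth 0 a 0))
       / ((1 - l ^ (nth 0 a 0)) ^+ 2 * \prod_(x <- behead a) (1 - l ^ x))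
       * chi l).

Definition order_RZ (x : algC) (n : nat) : Prop :=
  [/\ x \is Num.real, (0 < n)%N, n%:R * x \is a Num.int &
      forall m : nat, (0 < m < n)%N -> ~ (m%:R * x \is a Num.int)].

From HB Require Import structures.
From mathcomp Require Import all_boot all_order all_algebra all_field ring.
Set Implicit Arguments. Unset Strict Implicit. Unset Printing Implicit Defensive.
Import Order.TTheory GRing.Theory Num.Theory.
Local Open Scope ring_scope.

(* We compute the two eta invariants exactly and then read off their orders
   in R/Z.
   - For the all-ones tuple of length 2n the defining sum of F collapses to
     F(1,...,1)(chi) = 1/8 * sum_{1 <> l in C_8} l^n (1 + l) chi(l) / (1 - l)^(2n+1)
     (lemma F_ones).
   - With chi = 2 rho_0 - rho_1 - rho_3, i.e. chi(l) = 2 - l - l^3, the seven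
     summands are rational expressions in a primitive 8th root of unity z,
     whose denominators 1 - z^k (0 < k < 8) do not vanish.  Clearing them
     and reducing modulo z^4 = -1 is a finite computation in Q(z), which
     gives F_5((1,1)) = -3/2 and F_13((1,...,1)) = -17/4.
   - A rational number p/q in lowest terms has order exactly q in R/Z
     (lemma order_RZ_ratio), so the two values have order 2 and 4. *)

Definition ones_term (n : nat) (chi : algC -> algC) (l : algC) : algC :=
  l ^+ n * (1 + l) / (1 - l) ^+ n.*2.+1 * chi l.

Lemma sum_ones (m : nat) : \sum_(x <- nseq m (1 : int)) x = m%:Z.
Proof. by rewrite big_nseq iter_addr_0 natz. Qed.

Lemma prod_ones (R : pzSemiRingType) (f : int -> R) (m : nat) :
  \prod_(x <- nseq m (1 : int)) f x = f 1 ^+ m.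
Proof. by rewrite big_nseq iter_mulr_1. Qed.

(* For a = (1,...,1) of length 2n the exponent (a_1+...+a_2n)/2 is n and the
   denominator is (1 - l)^2 (1 - l)^(2n-1). *)
Lemma F_ones (z : algC) (n : nat) (chi : algC -> algC) : (0 < n)%N ->
  F z (nseq n.*2 1) chi = 8^-1 * \sum_(k < 8 | k != ord0) ones_term n chi (z ^+ k).
Proof.
case: n => // n _; rewrite /F; congr (_ * _); apply: eq_bigr => k _.
have half : ((n.+1.*2)%:Z %/ 2)%Z = n.+1 by rewrite -muln2 PoszM mulzK.
rewrite /ones_term sum_ones half nth_nseq /= big_cons prod_ones expr1z.
by rewrite -exprS -exprD addnS doubleS.
Qed.

Lemma sum_nontrivial8 (R : pzSemiRingType) (V : nmodType) (z : R) (f : R -> V) :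
  \sum_(k < 8 | k != ord0) f (z ^+ k) =
  f z + f (z ^+ 2) + f (z ^+ 3) + f (z ^+ 4) + f (z ^+ 5) + f (z ^+ 6) + f (z ^+ 7).
Proof. by rewrite big_mkcond !big_ord_recl big_ord0 /= !addrA addr0 add0r. Qed.

Lemma one_sub_root_neq0 (n : nat) (z : algC) (k : nat) :
  n.-primitive_root z -> (0 < k < n)%N -> 1 - z ^+ k != 0.
Proof.
move=> hz /andP[k_gt0 k_lt_n]; rewrite subr_eq0 eq_sym -(prim_order_dvd hz).
by rewrite gtnNdvd.
Qed.

(* The relation used to reduce powers of z: z^4 is the element of order 2. *)
Lemma prim8_pow4 (z : algC) : 8.-primitive_root z -> z ^+ 4 = -1.
Proof.
move=> hz; have z4_neq1 : z ^+ 4 != 1 by rewrite -(prim_order_dvd hz).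
have : (z ^+ 4) ^+ 2 == 1 by rewrite -exprM (prim_expr_order hz).
by rewrite sqrf_eq1 (negbTE z4_neq1) => /eqP.
Qed.

Lemma chi_SDE (l : algC) : chi_SD l = 2 - l - l ^+ 3.
Proof. by rewrite /chi_SD /rho expr0z expr1z mulr1. Qed.

Lemma F5_value (z : algC) : 8.-primitive_root z ->
  F z [:: 1; 1] chi_SD = (-3)%:~R / 2%:R.
Proof.
move=> hz; have z4 := prim8_pow4 hz; have nz k := @one_sub_root_neq0 8 z k hz.
rewrite -[[:: 1; 1]]/(nseq 1.*2 1) F_ones // sum_nontrivial8 /ones_term /=.
rewrite !chi_SDE; field: z4.
have nz1 : 1 - z != 0 := nz 1%N isT.
by rewrite nz1 !nz.
Qed.

Lemma F13_value (z : algC) : 8.-primitive_root z ->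
  F z [:: 1; 1; 1; 1; 1; 1] chi_SD = (-17)%:~R / 4%:R.
Proof.
move=> hz; have z4 := prim8_pow4 hz; have nz k := @one_sub_root_neq0 8 z k hz.
rewrite -[[:: 1; 1; 1; 1; 1; 1]]/(nseq 3.*2 1) F_ones // sum_nontrivial8.
rewrite /ones_term /= !chi_SDE; field: z4.
have nz1 : 1 - z != 0 := nz 1%N isT.
by rewrite nz1 !nz.
Qed.

(* A fraction p/q in lowest terms has order exactly q in R/Z: m p/q is an
   integer iff q divides m p, iff q divides m. *)
Lemma order_RZ_ratio (p : int) (q : nat) :
  (0 < q)%N -> coprime `|p| q -> order_RZ (p%:~R / q%:R : algC) q.
Proof.
move=> q_gt0 cop_pq; have q_neq0 : (q%:R : algC) != 0 by rewrite pnatr_eq0 -lt0n.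
split=> //; first by rewrite rpred_div ?realz ?realn.
  by rewrite mulrC divfK // rpred_int.
move=> m /andP[m_gt0 m_lt_q] /intrP[n mpq].
have : (m%:R * p%:~R : algC) = (n * q%:Z)%:~R by rewrite intrM -mpq mulrA divfK.
rewrite -[m%:R]/((m%:Z)%:~R) -intrM => /intr_inj /(congr1 absz).
rewrite !abszM /= => mpq_abs.
have : (q %| m * `|p|)%N by rewrite mpq_abs dvdn_mull.
by rewrite Gauss_dvdl 1?coprime_sym // gtnNdvd.
Qed.

Theorem mainTheorem7 (z : algC) (hz : 8.-primitive_root z) :
  order_RZ (F z [:: 1; 1] chi_SD) 2 /\
  order_RZ (F z [:: 1; 1; 1; 1; 1; 1] chi_SD) 4.
Proof. by rewrite (F5_value hz) (F13_value hz); split; apply: order_RZ_ratio. Qed.
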